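(* Let $S$ be a group and $L, L'$ subgroups of $S$, and let $k$ be a positive integer. Write $A^{\times k}$ for the direct product of $k$ copies of a group $A$, so that $L^{\times k}$ and $L'^{\times k}$ are subgroups of $S^{\times k}$. (1) If $(S,L,L')$ is a Gassman-Sunada triple with property FF, then $(S^{\times k},L^{\times k},L'^{\times k})$ is a Gassman-Sunada triple with property FF. (2) If $(S,L,L')$ is an EC-triple with property FF, then $(S^{\times k},L^{\times k},L'^{\times k})$ is an EC-triple with property FF.
   Context: A triple $(G,H,H')$ with $H,H'\le G$ is a Gassman-Sunada triple (almost conjugate, AC) if there is a bijection $B:H\to H'$ such that $B(h)$ is conjugate to $h$ in $G$ for every $h\in H$ (equivalently, $|g^G\cap H|=|g^G\cap H'|$ for all $g\in G$). It is an EC-triple ($H,H'$ elementwise conjugate) if every element of $H$ is conjugate in $G$ to some element of $H'$ and every element of $H'$ is conjugate in $G$ to some element of $H$. The triple has property FF if no nontrivial normal subgroup of $G$ is contained in $H$, and no nontrivial normal subgroup of $G$ is contained in $H'$ (i.e. the left-translation actions of $G$ on $G/H$ and on $G/H'$ are faithful). *)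

From HB Require Import structures.
From mathcomp Require Import all_boot all_fingroup.
Set Implicit Arguments. Unset Strict Implicit. Unset Printing Implicit Defensive.
Local Open Scope group_scope.

Definition GS_triple (gT : finGroupType) (G H H' : {set gT}) : Prop :=
  H \subset G /\ H' \subset G /\
  exists B : gT -> gT,
    [/\ {in H &, injective B}, B @: H = H' & {in H, forall h, B h \in h ^: G}].

Definition EC_triple (gT : finGroupType) (G H H' : {set gT}) : Prop :=
  H \subset G /\ H' \subset G /\
  (forall h, h \in H -> exists2 h', h' \in H' & h' \in h ^: G) /\
  (forall h', h' \in H' -> exists2 h, h \in H & h \in h' ^: G).

Definition FF_prop (gT : finGroupType) (G H H' : {set gT}) : Prop :=
  forall N : {group gT}, N <| G -> (N \subset H) || (N \subset H') -> N = 1 :> {set gT}.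

(* k-fold direct product S^{x k}: the group {dffun 'I_k -> gT} with pointwise
   multiplication (gproduct.v), and A^{x k} = setXn of k copies of A. *)
Notation powT gT k := {dffun forall i : 'I_k, gT}.
Definition setpow (gT : finGroupType) (k : nat) (A : {set gT}) : {set powT gT k} :=
  setXn (fun _ : 'I_k => A).

From HB Require Import structures.
From mathcomp Require Import all_boot all_fingroup.
Set Implicit Arguments. Unset Strict Implicit. Unset Printing Implicit Defensive.
Local Open Scope group_scope.

(* Membership and conjugacy in a direct product are read coordinatewise, so
   bijections B_i : H_i -> H'_i (or elementwise matchings) assemble into one
   on the product.  For FF, a normal subgroup N
   of the product contained in the product of the H_i projects in each
   coordinate onto a normal subgroup of G_i contained in H_i, which is trivial;
   hence every coordinate of every element of N is 1. *)

Section DirectProductTriples.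
Variables (I : finType) (gT : I -> finGroupType).
Local Notation gTn := {dffun forall i : I, gT i}.

Lemma conjg_dffun (x y : gTn) i : (x ^ y) i = x i ^ y i.
Proof. by rewrite /conjg !mulg_ffun invg_ffun. Qed.

Lemma dffun_all_exists (P : forall i, gT i -> Prop) :
  (forall i, exists x, P i x) -> exists f : gTn, forall i, P i (f i).
Proof. by case/fin_all_exists => f Pf; exists (finfun f) => i; rewrite ffunE. Qed.

Lemma classXnP (G : forall i, {set gT i}) (x y : gTn) :
  reflect (forall i, y i \in x i ^: G i) (y \in x ^: setXn G).
Proof.
apply: (iffP idP) => [/imsetP[g /setXnP Gg ->] i | yG].
  by rewrite conjg_dffun; apply: imset_f.
have /dffun_all_exists[g Gg] i : exists g, g \in G i /\ y i = x i ^ g.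
  by have /imsetP[g ? ->] := yG i; exists g.
apply/imsetP; exists g; first by apply/setXnP => i; case: (Gg i).
by apply/ffunP => i; rewrite conjg_dffun; case: (Gg i).
Qed.

Lemma GS_tripleXn (G H H' : forall i, {set gT i}) :
  (forall i, GS_triple (G i) (H i) (H' i)) ->
  GS_triple (setXn G) (setXn H) (setXn H').
Proof.
move=> GS_G; have [sHG sH'G] : (forall i, H i \subset G i) /\
    (forall i, H' i \subset G i) by split=> i; case: (GS_G i) => [? []].
have /fin_all_exists[B /all_and3[injB imB conjB]] i : exists B : gT i -> gT i,
    [/\ {in H i &, injective B}, B @: H i = H' i & {in H i, forall h, B h \in h ^: G i}].
  by case: (GS_G i) => _ [].
split; [exact: setXnS | split; first exact: setXnS].
exists (fun f : gTn => finfun (fun i => B i (f i))); split.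
- move=> f g /setXnP Hf /setXnP Hg /ffunP eq_fg; apply/ffunP => i.
  by apply: injB => //; have := eq_fg i; rewrite !ffunE.
- apply/setP => g; apply/imsetP/setXnP => [[f /setXnP Hf ->] i | H'g].
    by rewrite ffunE -imB imset_f.
  have /dffun_all_exists[f Hf] i : exists h, h \in H i /\ g i = B i h.
    by have := H'g i; rewrite -imB => /imsetP[h ? ->]; exists h.
  exists f; first by apply/setXnP => i; case: (Hf i).
  by apply/ffunP => i; rewrite ffunE; case: (Hf i).
- by move=> f /setXnP Hf; apply/classXnP => i; rewrite ffunE conjB.
Qed.

Lemma classXn_meet (G A : forall i, {set gT i}) (f : gTn) :
  (forall i, exists2 a, a \in A i & a \in f i ^: G i) ->
  exists2 g, g \in setXn A & g \in f ^: setXn G.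
Proof.
move=> match_f.
have /dffun_all_exists[g Ag] i : exists a, a \in A i /\ a \in f i ^: G i.
  by have [a ? ?] := match_f i; exists a.
exists g; first by apply/setXnP => i; case: (Ag i).
by apply/classXnP => i; case: (Ag i).
Qed.

Lemma EC_tripleXn (G H H' : forall i, {set gT i}) :
  (forall i, EC_triple (G i) (H i) (H' i)) ->
  EC_triple (setXn G) (setXn H) (setXn H').
Proof.
move=> EC_G; split; first by apply: setXnS => i; case: (EC_G i).
split; first by apply: setXnS => i; case: (EC_G i) => _ [].
split=> f /setXnP Hf; apply: (@classXn_meet G) => i.
  by case: (EC_G i) => _ [_ [match_H _]]; apply: match_H.
by case: (EC_G i) => _ [_ [_ match_H']]; apply: match_H'.
Qed.

Lemma FF_propXn (G H H' : forall i, {group gT i}) :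
  (forall i, FF_prop (G i) (H i) (H' i)) ->
  FF_prop (setXn G) (setXn H) (setXn H').
Proof.
move=> FF_G N nsNG sN_HH'; apply/trivgP/subsetP => f Nf.
apply/set1P/ffunP => i; rewrite oneg_ffun.
pose pi := dffun_morphism gT i.
have nsNiG : pi @* N <| G i by rewrite -(morphim_dffunXn i G) morphim_normal.
have sNi_HH' : (pi @* N \subset H i) || (pi @* N \subset H' i).
  rewrite -(morphim_dffunXn i H) -(morphim_dffunXn i H').
  by case/orP: sN_HH' => /(morphimS pi) ->; rewrite ?orbT.
have : f i \in pi @* N by apply: (mem_morphim pi); rewrite ?inE.
by rewrite (FF_G i (pi @* N)%G) // => /set1P.
Qed.

End DirectProductTriples.

Theorem mainTheorem1 (gT : finGroupType) (S L L' : {group gT}) (k : nat) :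
  0 < k ->
  (GS_triple S L L' /\ FF_prop S L L' ->
     GS_triple (setpow k S) (setpow k L) (setpow k L') /\
     FF_prop (setpow k S) (setpow k L) (setpow k L')) /\
  (EC_triple S L L' /\ FF_prop S L L' ->
     EC_triple (setpow k S) (setpow k L) (setpow k L') /\
     FF_prop (setpow k S) (setpow k L) (setpow k L')).
Proof.
move=> _; have FFk := @FF_propXn _ (fun _ : 'I_k => gT) (fun=> S) (fun=> L) (fun=> L').
split=> [[GS FF] | [EC FF]]; split; try exact: FFk.
- exact: (@GS_tripleXn _ (fun _ : 'I_k => gT) (fun=> S) (fun=> L) (fun=> L')).
- exact: (@EC_tripleXn _ (fun _ : 'I_k => gT) (fun=> S) (fun=> L) (fun=> L')).
Qed.
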